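(* Let $R>0$, $n\ge2$, and let $u,\tilde u$ be radially symmetric functions with $u,\tilde u\in C^{2,1}((B_R\setminus\{0\})\times(0,\infty))\cap C(\overline{B_R}\times[0,\infty))$, $\sup u_r\le0$, $\sup\tilde u_r\le0$, which both solve $(\ast)$ with the same initial datum $u_0$. Then $u=\tilde u$.
   Context: $B_R=\{x\in\mathbb R^n:|x|<R\}$; radial functions written in $r=|x|$, subscript $r$ = radial derivative. $u^*(r):=-\sqrt[3]{9n-15}\,r^{1/3}$. Problem $(\ast)$: $u_t=\Delta u+uu_r^3$ in $(B_R\setminus\{0\})\times(0,\infty)$, $u(0,t)=0$ and $u(R,t)=u^*(R)$ for $t>0$, $u(\cdot,0)=u_0$ in $\overline{B_R}$. *)

From Stdlib Require Import Reals Lra.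
Open Scope R_scope.

(* Radially symmetric functions u(x,t) = v(|x|,t) are represented by their
   profile v : R -> R -> R, v r t, with r = |x| in [0,R], t >= 0. *)

Definition continuous2_on (D : R -> R -> Prop) (f : R -> R -> R) : Prop :=
  forall r t, D r t ->
  forall eps, 0 < eps -> exists delta, 0 < delta /\
    forall r' t', D r' t' -> Rabs (r' - r) < delta -> Rabs (t' - t) < delta ->
      Rabs (f r' t' - f r t) < eps.

(* Punctured open cylinder (B_R \ {0}) x (0,oo), in radial variable. *)
Definition open_dom (Rb : R) (r t : R) : Prop := 0 < r < Rb /\ 0 < t.
Definition closed_dom (Rb : R) (r t : R) : Prop := 0 <= r <= Rb /\ 0 <= t.

Definition C21_radial (Rb : R) (v vr vrr vt : R -> R -> R) : Prop :=
  (forall r t, open_dom Rb r t ->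
     derivable_pt_lim (fun s => v s t) r (vr r t) /\
     derivable_pt_lim (fun s => vr s t) r (vrr r t) /\
     derivable_pt_lim (fun s => v r s) t (vt r t)) /\
  continuous2_on (open_dom Rb) v /\
  continuous2_on (open_dom Rb) vr /\
  continuous2_on (open_dom Rb) vrr /\
  continuous2_on (open_dom Rb) vt.

(* u^*(r) = - cbrt(9n-15) r^{1/3}, for r > 0 and n >= 2 (so 9n-15 > 0). *)
Definition ustar (n : nat) (r : R) : R :=
  - (Rpower (9 * INR n - 15) (1/3) * Rpower r (1/3)).

(* v is a radial solution of ( * ) with initial datum u0, in the class
   C^{2,1}((B_R\{0}) x (0,oo)) ∩ C(closure(B_R) x [0,oo)), with sup u_r <= 0.
   For radial u, Delta u = v_rr + (n-1)/r v_r. *)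
Definition radial_solution (n : nat) (Rb : R) (u0 : R -> R) (v : R -> R -> R)
  : Prop :=
  exists vr vrr vt : R -> R -> R,
    C21_radial Rb v vr vrr vt /\
    continuous2_on (closed_dom Rb) v /\
    (forall r t, open_dom Rb r t -> vr r t <= 0) /\
    (forall r t, open_dom Rb r t ->
       vt r t = vrr r t + (INR n - 1) / r * vr r t + v r t * (vr r t) ^ 3) /\
    (forall t, 0 < t -> v 0 t = 0) /\
    (forall t, 0 < t -> v Rb t = ustar n Rb) /\
    (forall r, 0 <= r <= Rb -> v r 0 = u0 r).

From Stdlib Require Import Reals Lra Classical ClassicalEpsilon.
From Coquelicot Require Compactness.
Open Scope R_scope.

(* Uniqueness by a comparison (maximum) principle.

   It suffices to show u <= ũ for any two radial solutions with the same data;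
   the theorem then follows by symmetry.  Suppose u(r,t) > ũ(r,t).  For a small
   eps > 0 the penalized difference  z = u - ũ - eps s  is continuous on the
   compact rectangle [0,R] x [0,t], so it attains a positive maximum there at
   some (r0,t0).  The boundary values of u and ũ coincide (at s = 0, r = 0 and
   r = R), so (r0,t0) is an interior point of the punctured cylinder, with
   possibly t0 = t.  There elementary calculus gives  z_r = 0,  z_rr <= 0 and
   z_t >= 0, i.e.  u_r = ũ_r,  u_rr <= ũ_rr  and  u_t - ũ_t >= eps.  Subtracting
   the two equations, the first-order terms cancel and the nonlinearity leaves
   (u - ũ) u_r^3 <= 0  because u_r <= 0, so  u_t - ũ_t <= 0 < eps: contradiction. *)

Lemma continuous2_on_subset (D D' : R -> R -> Prop) (f : R -> R -> R) :
  (forall r t, D' r t -> D r t) -> continuous2_on D f -> continuous2_on D' f.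
Proof.
  intros HDD' Hf r t Hrt eps Heps.
  destruct (Hf r t (HDD' r t Hrt) eps Heps) as [delta [Hdelta Hclose]].
  exists delta; split; [exact Hdelta |].
  intros r' t' Hrt'; apply Hclose, HDD', Hrt'.
Qed.

Lemma continuous2_on_minus (D : R -> R -> Prop) (f g : R -> R -> R) :
  continuous2_on D f -> continuous2_on D g ->
  continuous2_on D (fun r t => f r t - g r t).
Proof.
  intros Hf Hg r t Hrt eps Heps.
  destruct (Hf r t Hrt (eps / 2)) as [df [Hdf Hf']]; [lra |].
  destruct (Hg r t Hrt (eps / 2)) as [dg [Hdg Hg']]; [lra |].
  exists (Rmin df dg); split; [apply Rmin_pos; assumption |].
  intros r' t' Hrt' Hr Ht.
  assert (Ef := Hf' r' t' Hrt' (Rlt_le_trans _ _ _ Hr (Rmin_l _ _))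
                               (Rlt_le_trans _ _ _ Ht (Rmin_l _ _))).
  assert (Eg := Hg' r' t' Hrt' (Rlt_le_trans _ _ _ Hr (Rmin_r _ _))
                               (Rlt_le_trans _ _ _ Ht (Rmin_r _ _))).
  apply Rabs_def2 in Ef; apply Rabs_def2 in Eg; apply Rabs_def1; lra.
Qed.

Lemma continuous2_on_linear_time (D : R -> R -> Prop) (c : R) :
  continuous2_on D (fun _ t => c * t).
Proof.
  intros r t _ eps Heps.
  assert (Hc : 0 < Rabs c + 1) by (pose proof (Rabs_pos c); lra).
  exists (eps / (Rabs c + 1)); split; [apply Rdiv_lt_0_compat; assumption |].
  intros r' t' _ _ Ht.
  rewrite <- Rmult_minus_distr_l, Rabs_mult.
  assert (Hscaled : (Rabs c + 1) * Rabs (t' - t) < eps).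
  { apply (Rmult_lt_compat_l (Rabs c + 1)) in Ht; [| exact Hc].
    unfold Rdiv in Ht; rewrite <- Rmult_assoc, (Rmult_comm _ eps), Rmult_assoc,
      Rinv_r, Rmult_1_r in Ht by lra.
    exact Ht. }
  pose proof (Rabs_pos (t' - t)); nra.
Qed.

Definition rect (a b c d r t : R) : Prop := a <= r <= b /\ c <= t <= d.

Lemma rect_uniform_continuity (a b c d : R) (f : R -> R -> R) :
  continuous2_on (rect a b c d) f ->
  forall eps, 0 < eps -> exists delta, 0 < delta /\ forall r t r' t',
    rect a b c d r t -> rect a b c d r' t' ->
    Rabs (r - r') < delta -> Rabs (t - t') < delta ->
    Rabs (f r t - f r' t') < eps.
Proof.
  intros Hf eps Heps.
  assert (Hmod : forall p q, exists delta, 0 < delta /\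
    (rect a b c d p q -> forall r t, rect a b c d r t ->
      Rabs (r - p) < delta -> Rabs (t - q) < delta -> Rabs (f r t - f p q) < eps / 2)).
  { intros p q; destruct (classic (rect a b c d p q)) as [Hpq | Hpq].
    - destruct (Hf p q Hpq (eps / 2)) as [delta [Hdelta Hclose]]; [lra |].
      exists delta; split; [exact Hdelta | intros _; exact Hclose].
    - exists 1; split; [lra | contradiction]. }
  set (modulus := fun p q => proj1_sig (constructive_indefinite_description _ (Hmod p q))).
  assert (Hmodulus : forall p q, 0 < modulus p q /\
    (rect a b c d p q -> forall r t, rect a b c d r t ->
      Rabs (r - p) < modulus p q -> Rabs (t - q) < modulus p q ->
      Rabs (f r t - f p q) < eps / 2)).
  { intros p q; exact (proj2_sig (constructive_indefinite_description _ (Hmod p q))). }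
  assert (Hhalf : forall p q, 0 < modulus p q / 2)
    by (intros p q; pose proof (proj1 (Hmodulus p q)); lra).
  destruct (Compactness.compactness_value_2d a b c d
              (fun p q => mkposreal _ (Hhalf p q))) as [delta Hcover].
  exists delta; split; [apply cond_pos |].
  intros r t r' t' [Hr Ht] Hrt' Hrr' Htt'.
  apply Rnot_le_lt; intro Hfar.
  apply (Hcover r t Hr Ht); intros [p [q [Hp [Hq [Hrp [Htq Hdelta]]]]]]; simpl in *.
  destruct (Hmodulus p q) as [_ Hclose].
  apply Rabs_def2 in Hrp; apply Rabs_def2 in Htq;
    apply Rabs_def2 in Hrr'; apply Rabs_def2 in Htt'.
  assert (E := Hclose (conj Hp Hq) r t (conj Hr Ht)
                 ltac:(apply Rabs_def1; lra) ltac:(apply Rabs_def1; lra)).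
  assert (E' := Hclose (conj Hp Hq) r' t' Hrt'
                 ltac:(apply Rabs_def1; lra) ltac:(apply Rabs_def1; lra)).
  apply Rabs_def2 in E; apply Rabs_def2 in E'.
  revert Hfar; unfold Rabs at 1; destruct Rcase_abs; lra.
Qed.

Definition clamp (lo hi x : R) : R := Rmax lo (Rmin hi x).

Lemma clamp_in (lo hi x : R) : lo <= hi -> lo <= clamp lo hi x <= hi.
Proof. intros; unfold clamp, Rmax, Rmin; repeat destruct Rle_dec; lra. Qed.

Lemma clamp_id (lo hi x : R) : lo <= x <= hi -> clamp lo hi x = x.
Proof. intros; unfold clamp, Rmax, Rmin; repeat destruct Rle_dec; lra. Qed.

Lemma clamp_contraction (lo hi x y : R) :
  Rabs (clamp lo hi x - clamp lo hi y) <= Rabs (x - y).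
Proof.
  intros; unfold clamp, Rmax, Rmin, Rabs;
    repeat (destruct Rle_dec || destruct Rcase_abs); lra.
Qed.

Lemma uniform_continuity_continuity_pt (g : R -> R) :
  (forall eps, 0 < eps -> exists delta, 0 < delta /\
     forall x y, Rabs (x - y) < delta -> Rabs (g x - g y) < eps) ->
  forall x, continuity_pt g x.
Proof.
  intros Hg x eps Heps; destruct (Hg eps Heps) as [delta [Hdelta Hclose]].
  exists delta; split; [exact Hdelta |].
  intros y [_ Hy]; apply Hclose, Hy.
Qed.

(* Composing with the clamps extends f from the rectangle to a uniformly
   continuous function on the whole plane. *)
Lemma clamped_uniform_continuity (a b c d : R) (f : R -> R -> R) :
  a <= b -> c <= d -> continuous2_on (rect a b c d) f ->
  forall eps, 0 < eps -> exists delta, 0 < delta /\ forall x y x' y',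
    Rabs (x - x') < delta -> Rabs (y - y') < delta ->
    Rabs (f (clamp a b x) (clamp c d y) - f (clamp a b x') (clamp c d y')) < eps.
Proof.
  intros Hab Hcd Hf eps Heps.
  destruct (rect_uniform_continuity a b c d f Hf eps Heps) as [delta [Hdelta Hclose]].
  exists delta; split; [exact Hdelta |]; intros x y x' y' Hx Hy.
  apply Hclose; try (split; apply clamp_in; assumption);
    eapply Rle_lt_trans; try apply clamp_contraction; assumption.
Qed.

Lemma partial_max_continuous (a b : R) (F : R -> R -> R) :
  a <= b ->
  (forall eps, 0 < eps -> exists delta, 0 < delta /\ forall x y x' y',
     Rabs (x - x') < delta -> Rabs (y - y') < delta -> Rabs (F x y - F x' y') < eps) ->
  exists g : R -> R,
    (forall y, a <= g y <= b /\ forall x, a <= x <= b -> F x y <= F (g y) y) /\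
    forall y, continuity_pt (fun y => F (g y) y) y.
Proof.
  intros Hab HF.
  assert (Hzero : forall delta, 0 < delta -> forall x, Rabs (x - x) < delta)
    by (intros delta Hdelta x; rewrite Rminus_diag, Rabs_R0; exact Hdelta).
  assert (Hmax : forall y, exists x0,
     (forall x, a <= x <= b -> F x y <= F x0 y) /\ a <= x0 <= b).
  { intro y; apply continuity_ab_maj; [exact Hab | intros x _].
    apply uniform_continuity_continuity_pt; intros eps Heps.
    destruct (HF eps Heps) as [delta [Hdelta Hclose]].
    exists delta; split; [exact Hdelta |]; intros x1 x2 Hx.
    exact (Hclose x1 y x2 y Hx (Hzero delta Hdelta y)). }
  set (g := fun y => proj1_sig (constructive_indefinite_description _ (Hmax y))).
  assert (Hg : forall y, (forall x, a <= x <= b -> F x y <= F (g y) y) /\ a <= g y <= b)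
    by (intro y; exact (proj2_sig (constructive_indefinite_description _ (Hmax y)))).
  exists g; split; [intro y; split; apply Hg |].
  intro y; apply uniform_continuity_continuity_pt; intros eps Heps.
  destruct (HF eps Heps) as [delta [Hdelta Hclose]].
  exists delta; split; [exact Hdelta |]; intros y1 y2 Hy.
  (* each value dominates the other's maximizer, and moving y costs < eps *)
  assert (E1 := Hclose (g y1) y1 (g y1) y2 (Hzero delta Hdelta _) Hy).
  assert (E2 := Hclose (g y2) y2 (g y2) y1 (Hzero delta Hdelta _)
                  ltac:(rewrite Rabs_minus_sym; exact Hy)).
  assert (G1 := proj1 (Hg y2) (g y1) (proj2 (Hg y1))).
  assert (G2 := proj1 (Hg y1) (g y2) (proj2 (Hg y2))).
  apply Rabs_def2 in E1; apply Rabs_def2 in E2; apply Rabs_def1; lra.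
Qed.

(* Maximize the clamped extension in r for each t, then the value in t. *)
Lemma rect_extreme_value (a b c d : R) (f : R -> R -> R) :
  a <= b -> c <= d -> continuous2_on (rect a b c d) f ->
  exists r0 t0, rect a b c d r0 t0 /\
    forall r t, rect a b c d r t -> f r t <= f r0 t0.
Proof.
  intros Hab Hcd Hf.
  set (F := fun x y => f (clamp a b x) (clamp c d y)).
  destruct (partial_max_continuous a b F Hab
              (clamped_uniform_continuity a b c d f Hab Hcd Hf)) as [g [Hg Hcont]].
  destruct (continuity_ab_maj (fun y => F (g y) y) c d Hcd (fun y _ => Hcont y))
    as [t0 [Ht0max Ht0]].
  exists (g t0), t0; split; [split; [apply Hg | exact Ht0] |].
  intros r t [Hr Ht].
  assert (E := proj2 (Hg t) r Hr); assert (E' := Ht0max t Ht); unfold F in *.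
  rewrite (clamp_id a b r), (clamp_id c d t), (clamp_id a b (g t0)),
    (clamp_id c d t0) in * by (apply Hg || assumption).
  lra.
Qed.

Lemma interior_max_deriv_zero (f : R -> R) (a b c l : R) :
  a < c < b -> derivable_pt_lim f c l ->
  (forall x, a < x < b -> f x <= f c) -> l = 0.
Proof.
  intros Hc Hd Hmax.
  pose (pr := exist (fun l => derivable_pt_lim f c l) l Hd : derivable_pt f c).
  change l with (derive_pt f c pr).
  apply (deriv_maximum f a b c pr); try lra; intros; apply Hmax; lra.
Qed.

Lemma right_end_max_deriv_nonneg (f : R -> R) (a c l : R) :
  a < c -> derivable_pt_lim f c l ->
  (forall x, a < x < c -> f x <= f c) -> 0 <= l.
Proof.
  intros Hc Hd Hmax; apply Rnot_lt_le; intro Hl.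
  destruct (Hd (- l)) as [delta Hdelta]; [lra |].
  pose proof (cond_pos delta) as Hpos.
  set (h := - Rmin (delta / 2) ((c - a) / 2)).
  assert (Hh : - (c - a) / 2 <= h < 0 /\ - delta < h)
    by (unfold h, Rmin; destruct Rle_dec; lra).
  assert (E := Hdelta h ltac:(lra) ltac:(rewrite Rabs_left; lra)).
  apply Rabs_def2 in E.
  assert (Hdrop := Hmax (c + h) ltac:(lra)).
  assert (Hquot : 0 <= (f (c + h) - f c) / h).
  { replace ((f (c + h) - f c) / h) with ((f c - f (c + h)) / - h) by (field; lra).
    apply Rmult_le_pos; [lra | apply Rlt_le, Rinv_0_lt_compat; lra]. }
  lra.
Qed.

(* If f' = g on (a, b) and f is maximal at the interior point c (where g c = 0),
   then g'(c) <= 0: otherwise f would increase just to the right of c. *)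
Lemma interior_max_second_deriv_nonpos (f g : R -> R) (a b c g' : R) :
  a < c < b -> (forall x, a < x < b -> derivable_pt_lim f x (g x)) -> g c = 0 ->
  derivable_pt_lim g c g' -> (forall x, a < x < b -> f x <= f c) -> g' <= 0.
Proof.
  intros Hc Hf Hg0 Hd Hmax; apply Rnot_lt_le; intro Hg'.
  destruct (Hd g') as [delta Hdelta]; [lra |].
  pose proof (cond_pos delta) as Hpos.
  set (h := Rmin (delta / 2) ((b - c) / 2)).
  assert (Hh : 0 < h <= (b - c) / 2 /\ h < delta)
    by (unfold h, Rmin; destruct Rle_dec; lra).
  destruct (MVT_cor2 f g c (c + h) ltac:(lra)) as [xi [Hmvt Hxi]];
    [intros; apply Hf; lra |].
  assert (Hgxi : 0 < g xi).
  { assert (E := Hdelta (xi - c) ltac:(lra) ltac:(rewrite Rabs_right; lra)).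
    replace (c + (xi - c)) with xi in E by ring; rewrite Hg0, Rminus_0_r in E.
    apply Rabs_def2 in E.
    assert (Hq : 0 < g xi / (xi - c)) by lra.
    replace (g xi) with (g xi / (xi - c) * (xi - c)) by (field; lra).
    apply Rmult_lt_0_compat; lra. }
  assert (Hdrop := Hmax (c + h) ltac:(lra)).
  assert (0 < g xi * (c + h - c)) by (apply Rmult_lt_0_compat; lra).
  lra.
Qed.

Definition penalized (u ut : R -> R -> R) (eps r t : R) : R :=
  u r t - ut r t - eps * t.

(* Two functions u, ũ with the derivatives of the C^{2,1} class, both solving
   the radial equation on the punctured cylinder; only u is assumed
   nonincreasing in r, since at a maximum of z the two slopes agree anyway. *)
Section InteriorMaximum.

Variables (n : nat) (Rb eps : R) (u ut vr vrr vt vr' vrr' vt' : R -> R -> R).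

Hypothesis u_derivs : forall r t, open_dom Rb r t ->
  derivable_pt_lim (fun s => u s t) r (vr r t) /\
  derivable_pt_lim (fun s => vr s t) r (vrr r t) /\
  derivable_pt_lim (fun s => u r s) t (vt r t).
Hypothesis ut_derivs : forall r t, open_dom Rb r t ->
  derivable_pt_lim (fun s => ut s t) r (vr' r t) /\
  derivable_pt_lim (fun s => vr' s t) r (vrr' r t) /\
  derivable_pt_lim (fun s => ut r s) t (vt' r t).
Hypothesis u_nonincreasing : forall r t, open_dom Rb r t -> vr r t <= 0.
Hypothesis u_equation : forall r t, open_dom Rb r t ->
  vt r t = vrr r t + (INR n - 1) / r * vr r t + u r t * (vr r t) ^ 3.
Hypothesis ut_equation : forall r t, open_dom Rb r t ->
  vt' r t = vrr' r t + (INR n - 1) / r * vr' r t + ut r t * (vr' r t) ^ 3.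
Hypothesis eps_pos : 0 < eps.

Let z := penalized u ut eps.

Lemma no_interior_max (r0 t0 : R) :
  open_dom Rb r0 t0 -> ut r0 t0 < u r0 t0 ->
  (forall r, 0 < r < Rb -> z r t0 <= z r0 t0) ->
  (forall t, 0 < t < t0 -> z r0 t <= z r0 t0) -> False.
Proof.
  intros Hdom Hgt Hmax_r Hmax_t.
  destruct Hdom as [Hr0 Ht0].
  assert (Hz_r : forall r, 0 < r < Rb ->
            derivable_pt_lim (fun s => z s t0) r (vr r t0 - vr' r t0 - 0)).
  { intros r Hr.
    destruct (u_derivs r t0 (conj Hr Ht0)) as [Du _].
    destruct (ut_derivs r t0 (conj Hr Ht0)) as [Dut _].
    apply (derivable_pt_lim_minus (fun s => u s t0 - ut s t0) (fun _ => eps * t0)).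
    - apply (derivable_pt_lim_minus (fun s => u s t0) (fun s => ut s t0)); assumption.
    - apply derivable_pt_lim_const. }
  destruct (u_derivs r0 t0 (conj Hr0 Ht0)) as [_ [Du_rr Du_t]].
  destruct (ut_derivs r0 t0 (conj Hr0 Ht0)) as [_ [Dut_rr Dut_t]].
  assert (Hslope : vr r0 t0 - vr' r0 t0 - 0 = 0)
    by exact (interior_max_deriv_zero _ 0 Rb r0 _ Hr0 (Hz_r r0 Hr0) Hmax_r).
  assert (Hconc : vrr r0 t0 - vrr' r0 t0 <= 0).
  { apply (interior_max_second_deriv_nonpos (fun s => z s t0)
             (fun s => vr s t0 - vr' s t0 - 0) 0 Rb r0); try assumption.
    replace (vrr r0 t0 - vrr' r0 t0) with (vrr r0 t0 - vrr' r0 t0 - 0) by ring.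
    apply derivable_pt_lim_minus; [| apply derivable_pt_lim_const].
    apply (derivable_pt_lim_minus (fun s => vr s t0) (fun s => vr' s t0)); assumption. }
  assert (Hgrowth : 0 <= vt r0 t0 - vt' r0 t0 - eps * 1).
  { apply (right_end_max_deriv_nonneg (fun s => z r0 s) 0 t0); try assumption.
    apply (derivable_pt_lim_minus (fun s => u r0 s - ut r0 s) (fun s => eps * s)).
    - apply (derivable_pt_lim_minus (fun s => u r0 s) (fun s => ut r0 s)); assumption.
    - apply (derivable_pt_lim_scal (fun s => s)), derivable_pt_lim_id. }
  (* the equations, with equal slopes, leave only the sign of the nonlinearity *)
  assert (Hdiff : vt r0 t0 - vt' r0 t0 =
            vrr r0 t0 - vrr' r0 t0 + (u r0 t0 - ut r0 t0) * vr r0 t0 ^ 3).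
  { rewrite (u_equation r0 t0 (conj Hr0 Ht0)), (ut_equation r0 t0 (conj Hr0 Ht0)).
    replace (vr' r0 t0) with (vr r0 t0) by lra; ring. }
  assert (Hcube : vr r0 t0 ^ 3 <= 0).
  { pose proof (pow_le (- vr r0 t0) 3
                  ltac:(pose proof (u_nonincreasing r0 t0 (conj Hr0 Ht0)); lra)).
    replace ((- vr r0 t0) ^ 3) with (- vr r0 t0 ^ 3) in * by ring; lra. }
  assert ((u r0 t0 - ut r0 t0) * vr r0 t0 ^ 3 <= 0) by nra.
  lra.
Qed.

End InteriorMaximum.

Lemma radial_solution_le (n : nat) (Rb : R) (u0 : R -> R) (u ut : R -> R -> R) :
  0 < Rb -> radial_solution n Rb u0 u -> radial_solution n Rb u0 ut ->
  forall r t, 0 <= r <= Rb -> 0 <= t -> u r t <= ut r t.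
Proof.
  intros HRb [vr [vrr [vt [[Hu_derivs _] [Hu_cont [Hu_sign [Hu_eq [Hu_0 [Hu_R Hu_init]]]]]]]]]
    [vr' [vrr' [vt' [[Hut_derivs _] [Hut_cont [_ [Hut_eq [Hut_0 [Hut_R Hut_init]]]]]]]]]
    r t Hr Ht.
  apply Rnot_lt_le; intro Hgt.
  set (gap := u r t - ut r t).
  set (eps := gap / (2 * (t + 1))).
  assert (Heps : 0 < eps) by (unfold eps, gap; apply Rdiv_lt_0_compat; lra).
  assert (Hgap : gap = 2 * eps * t + 2 * eps) by (unfold eps; field; lra).
  set (z := penalized u ut eps).
  assert (Hz_cont : continuous2_on (rect 0 Rb 0 t) z).
  { apply (continuous2_on_subset (closed_dom Rb));
      [intros x s [Hx Hs]; split; lra |].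
    apply continuous2_on_minus; [| apply continuous2_on_linear_time].
    apply continuous2_on_minus; assumption. }
  destruct (rect_extreme_value 0 Rb 0 t z ltac:(lra) Ht Hz_cont)
    as [r0 [t0 [[Hr0 Ht0] Hmax]]].
  assert (Hpos : 0 < z r0 t0).
  { assert (Hle : z r t <= z r0 t0) by (apply Hmax; split; lra).
    assert (0 <= eps * t) by (apply Rmult_le_pos; lra).
    assert (Hzrt : z r t = gap - eps * t) by reflexivity.
    lra. }
  assert (Heps_t0 : 0 <= eps * t0) by (apply Rmult_le_pos; lra).
  (* on the parabolic boundary u = ũ, so z <= 0 there *)
  assert (Ht0_pos : 0 < t0).
  { destruct Ht0 as [[Ht0 | Ht0] _]; [exact Ht0 |]; subst t0.
    unfold z, penalized in Hpos; rewrite Hu_init, Hut_init in Hpos by lra; lra. }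
  assert (Hr0_in : 0 < r0 < Rb).
  { unfold z, penalized in Hpos.
    destruct Hr0 as [[Hr0 | Hr0] [HRr0 | HRr0]]; subst.
    - lra.
    - rewrite Hu_R, Hut_R in Hpos by lra; lra.
    - rewrite Hu_0, Hut_0 in Hpos by lra; lra.
    - lra. }
  apply (no_interior_max n Rb eps u ut vr vrr vt vr' vrr' vt'
           Hu_derivs Hut_derivs Hu_sign Hu_eq Hut_eq Heps r0 t0 (conj Hr0_in Ht0_pos)).
  - unfold z, penalized in Hpos; lra.
  - intros x Hx; apply Hmax; split; lra.
  - intros s Hs; apply Hmax; split; lra.
Qed.

Theorem mainTheorem12 (Rb : R) (n : nat) (u0 : R -> R) (u ut : R -> R -> R) :
  0 < Rb -> (2 <= n)%nat ->
  radial_solution n Rb u0 u ->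
  radial_solution n Rb u0 ut ->
  forall r t, 0 <= r <= Rb -> 0 <= t -> u r t = ut r t.
Proof.
  intros HRb _ Hu Hut r t Hr Ht.
  apply Rle_antisym.
  - exact (radial_solution_le n Rb u0 u ut HRb Hu Hut r t Hr Ht).
  - exact (radial_solution_le n Rb u0 ut u HRb Hut Hu r t Hr Ht).
Qed.
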